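(* Let $p=(z_0,\tau_0,0)\in\mathcal{C}$. Then $\mathcal{H}(p)\cap\mathcal{C}=\{p\}$ if and only if $\tau_0=0$ (i.e. $p\in\mathcal{E}$), and in that case $\mathcal{H}(p)$ is tangent to $\mathcal{C}$ at $p$ (the derivative $dY/dz$ along $\mathcal{H}(p)$ vanishes at $z=z_0$). If $\tau_0\neq 0$, then $\mathcal{H}(p)\cap\mathcal{C}$ consists of exactly two points, namely $p$ and the point with $z$-coordinate $z_1=-\dfrac{\tau_0(1+z_0^2)-z_0}{\tau_0z_0(1+z_0^2)+1}$ (interpreted at $z=\infty$ if the denominator vanishes), and $\mathcal{H}(p)$ crosses $\mathcal{C}$ transversally at $p$, with $dY/dz=-2c\tau_0(1+z_0^2)/[1+(b_1-1)z_0^2]$ there.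
   Context: Fix real constants $a_1,a_2,a_3,a_4$ and $b_1>1$, and put $c=a_3-a_2$, assumed $>0$. Flux $F=(f,g)$, $f(u,v)=(b_1+1)u^2/2+v^2/2+a_1u+a_2v$, $g(u,v)=uv+a_3u+a_4v$. Coordinates $(z,\tau,Y)\in\mathbb{R}^3$. Define $\widetilde U(z,\tau)=\frac{2cz}{z^2+1}+c\tau(z^2-1)$, $V_1(z,\tau)=\frac{c}{z^2+1}+c\tau z$, $U=(\widetilde U-a_1+a_4)/b_1$, $V=V_1-a_3$. The point $(z,\tau,Y)$ has left state $W=(U+zY/2,\,V+Y/2)$ and right state $W'=(U-zY/2,\,V-Y/2)$. For $p\in\mathbb{R}^3$, $\mathcal{H}(p)=\{q: W(q)=W(p)\}$; it is the graph over $z\in\mathbb{R}$ of a smooth map $z\mapsto(\tau(z),Y(z))$. The characteristic plane is $\mathcal{C}=\{Y=0\}$ and the coincidence curve is $\mathcal{E}=\{Y=0,\tau=0\}$. *)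

From Stdlib Require Import Reals.
From Coquelicot Require Import Coquelicot.
Open Scope R_scope.

Definition pz (q : R * R * R) : R := fst (fst q).
Definition ptau (q : R * R * R) : R := snd (fst q).
Definition pY (q : R * R * R) : R := snd q.

Section Model.
Variables (a1 a2 a3 a4 b1 : R).

Definition cc : R := a3 - a2.

Definition Utilde (z tau : R) : R := 2 * cc * z / (z ^ 2 + 1) + cc * tau * (z ^ 2 - 1).
Definition V1 (z tau : R) : R := cc / (z ^ 2 + 1) + cc * tau * z.
Definition UU (z tau : R) : R := (Utilde z tau - a1 + a4) / b1.
Definition VV (z tau : R) : R := V1 z tau - a3.

Definition Wl (q : R * R * R) : R * R :=
  (UU (pz q) (ptau q) + pz q * pY q / 2, VV (pz q) (ptau q) + pY q / 2).

Definition inH (p q : R * R * R) : Prop := Wl q = Wl p.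

Definition inC (q : R * R * R) : Prop := pY q = 0.

Definition Hgraph (p : R * R * R) (tauf Yf : R -> R) : Prop :=
  forall z tau Y, inH p (z, tau, Y) <-> (tau = tauf z /\ Y = Yf z).

End Model.

From Stdlib Require Import Reals Lra Psatz.
From Coquelicot Require Import Coquelicot.
Open Scope R_scope.

(* Eliminating Y between the two components of W(q) = W(p) leaves an equation
   that is linear in tau with coefficient c E(z), E(z) = (b1-1) z^2 + 1 > 0, so
   H(p) is a graph over z, and along it Y = -2c Q(z) / ((1+z0^2) E(z)) for an
   quadratic Q vanishing at z0.  Hence H(p) meets C exactly at the real
   roots of Q.  Its leading coefficient is D = tau0 z0 (1+z0^2) + 1, and the
   other root is z1 = -(tau0 (1+z0^2) - z0)/D, which equals z0 iff tau0 = 0 (then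
   Q = (z-z0)^2); when D = 0 the second root has gone to infinity, where the
   limit of Y is proportional to D.  The slope of Y at z0 is read off Q'(z0). *)

Lemma is_lim_infty_of_inv (f g : R -> R) :
  continuous g 0 -> (forall z, z <> 0 -> f z = g (/ z)) ->
  is_lim f p_infty (g 0) /\ is_lim f m_infty (g 0).
Proof.
  intros hg hfg.
  split; apply is_lim_ext_loc with (fun z => g (/ z)).
  - exists 0; intros y hy; symmetry; apply hfg; lra.
  - apply is_lim_comp_continuous; [| exact hg].
    exact (is_lim_inv _ _ _ (is_lim_id p_infty) ltac:(discriminate)).
  - exists 0; intros y hy; symmetry; apply hfg; lra.
  - apply is_lim_comp_continuous; [| exact hg].
    exact (is_lim_inv _ _ _ (is_lim_id m_infty) ltac:(discriminate)).
Qed.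

Lemma Rdiv_eq0_iff x y : y <> 0 -> x / y = 0 <-> x = 0.
Proof.
  intro hy; split; intro h.
  - replace x with (x / y * y) by (field; exact hy); rewrite h; ring.
  - rewrite h; unfold Rdiv; ring.
Qed.

Section Locus.

Variables b1 c z0 t0 : R.
Hypothesis hb1 : 1 < b1.
Hypothesis hc : 0 < c.

Definition E (z : R) : R := (b1 - 1) * z ^ 2 + 1.
Definition u1 (z t : R) : R := 2 * c * z / (z ^ 2 + 1) + c * t * (z ^ 2 - 1).
Definition v1 (z t : R) : R := c / (z ^ 2 + 1) + c * t * z.

Definition locus_tau (z : R) : R :=
  (c * (2 - b1) * z / (z ^ 2 + 1) - u1 z0 t0 + b1 * z * v1 z0 t0) / (c * E z).

Definition D : R := t0 * z0 * (1 + z0 ^ 2) + 1.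
Definition A : R := 2 * z0 + t0 * (z0 ^ 4 - 1).
Definition Q (z : R) : R := D * z ^ 2 - A * z + (1 + z0 ^ 2) - D.
Definition z1 : R := - (t0 * (1 + z0 ^ 2) - z0) / D.

Definition locus_Y (z : R) : R := -2 * c * Q z / ((1 + z0 ^ 2) * E z).

Lemma E_pos z : 0 < E z.
Proof. unfold E; nra. Qed.

Lemma sqr_plus1_pos z : 0 < z ^ 2 + 1.
Proof. nra. Qed.

Lemma locus_tau_z0 : locus_tau z0 = t0.
Proof.
  pose proof (E_pos z0); pose proof (sqr_plus1_pos z0).
  unfold locus_tau, u1, v1, E in *; field; lra.
Qed.

Lemma locus_residual z t :
  u1 z t - u1 z0 t0 + b1 * z * (v1 z0 t0 - v1 z t) = c * E z * (locus_tau z - t).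
Proof.
  pose proof (E_pos z); pose proof (sqr_plus1_pos z).
  unfold locus_tau, u1, v1, E in *; field; nra.
Qed.

Lemma locus_Y_eq z : locus_Y z = 2 * (v1 z0 t0 - v1 z (locus_tau z)).
Proof.
  pose proof (E_pos z); pose proof (sqr_plus1_pos z); pose proof (sqr_plus1_pos z0).
  unfold locus_Y, locus_tau, Q, D, A, u1, v1, E in *; field; nra.
Qed.

Lemma locus_Y_eq0 z : locus_Y z = 0 <-> Q z = 0.
Proof.
  pose proof (E_pos z); pose proof (sqr_plus1_pos z0).
  unfold locus_Y; rewrite Rdiv_eq0_iff by nra.
  split; intro h; [| rewrite h; ring].
  apply Rmult_integral in h as [h | h]; [lra | exact h].
Qed.

Definition locus_slope : R := - 2 * c * t0 * (1 + z0 ^ 2) / (1 + (b1 - 1) * z0 ^ 2).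

Lemma is_derive_locus_Y : is_derive locus_Y z0 locus_slope.
Proof.
  pose proof (E_pos z0); pose proof (sqr_plus1_pos z0).
  unfold locus_slope, locus_Y, Q, E in *; auto_derive.
  - nra.
  - unfold D, A; field; lra.
Qed.

Lemma locus_slope_eq0 : locus_slope = 0 <-> t0 = 0.
Proof.
  pose proof (sqr_plus1_pos z0).
  unfold locus_slope; rewrite Rdiv_eq0_iff by nra.
  split; intro h; [| rewrite h; ring].
  apply Rmult_integral in h as [h | h]; [| lra].
  apply Rmult_integral in h as [h | h]; [lra | exact h].
Qed.

Definition locus_Y_infty : R := -2 * c * D / ((1 + z0 ^ 2) * (b1 - 1)).

Lemma is_lim_locus_Y :
  is_lim locus_Y p_infty locus_Y_infty /\ is_lim locus_Y m_infty locus_Y_infty.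
Proof.
  pose proof (sqr_plus1_pos z0).
  (* in w = 1/z the locus becomes a rational function regular at w = 0 *)
  pose (g w := -2 * c * (D - A * w + (1 + z0 ^ 2 - D) * w ^ 2)
                 / ((1 + z0 ^ 2) * ((b1 - 1) + w ^ 2))).
  replace locus_Y_infty with (g 0) by (unfold g, locus_Y_infty; field; lra).
  apply is_lim_infty_of_inv.
  - assert (hd : ex_derive g 0) by (unfold g; auto_derive; nra).
    exact (ex_derive_continuous g 0 hd).
  - intros z hz; pose proof (E_pos z).
    unfold g, locus_Y, Q, E in *; field; repeat split; nra.
Qed.

Lemma locus_Y_infty_eq0 : locus_Y_infty = 0 <-> D = 0.
Proof.
  pose proof (sqr_plus1_pos z0).
  unfold locus_Y_infty; rewrite Rdiv_eq0_iff by nra.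
  split; intro h; [| rewrite h; ring].
  apply Rmult_integral in h as [h | h]; [lra | exact h].
Qed.

Lemma Q_z0 : Q z0 = 0.
Proof. unfold Q, D, A; ring. Qed.

Lemma Q_root_tangent z : t0 = 0 -> Q z = 0 <-> z = z0.
Proof.
  intro ht0.
  assert (hQ : Q z = (z - z0) ^ 2) by (unfold Q, D, A; rewrite ht0; ring).
  rewrite hQ; split; intro h; [nra | subst; ring].
Qed.

Lemma Q_factor z : D <> 0 -> Q z = D * (z - z0) * (z - z1).
Proof. intro hD; unfold Q, A, z1, D in *; field; exact hD. Qed.

Lemma Q_root_two z : D <> 0 -> Q z = 0 <-> z = z0 \/ z = z1.
Proof.
  intro hD; rewrite (Q_factor z hD); split.
  - intro h; apply Rmult_integral in h as [h | h]; [apply Rmult_integral in h as [h | h] |].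
    + contradiction.
    + left; lra.
    + right; lra.
  - intros [-> | ->]; ring.
Qed.

Lemma z1_neq_z0 : t0 <> 0 -> D <> 0 -> z1 <> z0.
Proof.
  intros ht0 hD h.
  assert (hdiff : D * (z1 - z0) = - t0 * (1 + z0 ^ 2) ^ 2)
    by (unfold z1, D in *; field; exact hD).
  rewrite h in hdiff; pose proof (sqr_plus1_pos z0).
  assert (t0 * (1 + z0 ^ 2) ^ 2 = 0) as h0 by lra.
  apply Rmult_integral in h0 as [h0 | h0]; [contradiction | nra].
Qed.

(* With D = 0, Q(z0) = 0 forces A z0 = 1 + z0^2, so Q is a nonzero linear polynomial. *)
Lemma Q_root_infinite z : D = 0 -> Q z = 0 <-> z = z0.
Proof.
  intro hD; pose proof Q_z0 as h0; unfold Q in h0 |- *; rewrite hD in h0 |- *.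
  assert (hA : A * z0 = 1 + z0 ^ 2) by lra.
  split; intro h; [| subst; lra].
  assert (A * (z - z0) = 0) as hz by lra.
  apply Rmult_integral in hz as [hz | hz]; [rewrite hz in hA; nra | lra].
Qed.

End Locus.

Section Hugoniot.

Variables a1 a2 a3 a4 b1 z0 t0 : R.
Hypothesis hb1 : 1 < b1.
Hypothesis hc : 0 < a3 - a2.

Let c := a3 - a2.

Lemma Hgraph_locus :
  Hgraph a1 a2 a3 a4 b1 (z0, t0, 0) (locus_tau b1 c z0 t0) (locus_Y b1 c z0 t0).
Proof.
  intros z t Y.
  rewrite locus_Y_eq by assumption.
  unfold inH, Wl, UU, VV, pz, ptau, pY; cbn [fst snd].
  change (Utilde a2 a3) with (u1 c); change (V1 a2 a3) with (v1 c).
  rewrite pair_equal_spec.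
  assert (hcE : c * E b1 z <> 0) by (pose proof (E_pos b1 hb1 z); unfold c; nra).
  (* first component of W(q) - W(p), with Y eliminated using the second one *)
  assert (hfirst : forall t',
    (u1 c z t' - a1 + a4) / b1 + z * (2 * (v1 c z0 t0 - v1 c z t')) / 2
      - ((u1 c z0 t0 - a1 + a4) / b1 + z0 * 0 / 2)
    = c * E b1 z * (locus_tau b1 c z0 t0 z - t') / b1).
  { intro t'; rewrite <- (locus_residual b1 c z0 t0 hb1 hc z t'); field; lra. }
  set (tz := locus_tau b1 c z0 t0 z) in *.
  split.
  - intros [e1 e2].
    assert (hY : Y = 2 * (v1 c z0 t0 - v1 c z t)) by lra.
    rewrite hY in e1.
    assert (hres : c * E b1 z * (tz - t) / b1 = 0) by (rewrite <- hfirst; lra).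
    assert (ht : t = tz).
    { unfold Rdiv in hres; apply Rmult_integral in hres as [h | h].
      - apply Rmult_integral in h as [h | h]; [contradiction | lra].
      - exfalso; revert h; apply Rinv_neq_0_compat; lra. }
    split; [exact ht | rewrite hY, ht; reflexivity].
  - intros [-> ->]; split; [| lra].
    apply Rminus_diag_uniq; rewrite hfirst, Rminus_diag; unfold Rdiv; ring.
Qed.

Lemma Hgraph_is_lim_infty tauf Yf : Hgraph a1 a2 a3 a4 b1 (z0, t0, 0) tauf Yf ->
  is_lim Yf p_infty (locus_Y_infty b1 c z0 t0) /\
  is_lim Yf m_infty (locus_Y_infty b1 c z0 t0).
Proof.
  intro hg.
  assert (hY : forall z, locus_Y b1 c z0 t0 z = Yf z).
  { intro z; apply (hg z (locus_tau b1 c z0 t0 z) (locus_Y b1 c z0 t0 z)), Hgraph_locus; auto. }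
  destruct (is_lim_locus_Y b1 c z0 t0 hb1) as [hp hm].
  split; [exact (is_lim_ext _ _ _ _ hY hp) | exact (is_lim_ext _ _ _ _ hY hm)].
Qed.

Lemma char_point_iff q :
  inH a1 a2 a3 a4 b1 (z0, t0, 0) q /\ inC q <->
  exists z, Q z0 t0 z = 0 /\ q = (z, locus_tau b1 c z0 t0 z, 0).
Proof.
  destruct q as [[z t] Y]; unfold inC, pY; cbn [snd].
  rewrite (Hgraph_locus z t Y); split.
  - intros [[-> ->] hY]; exists z; split.
    + apply (locus_Y_eq0 b1 c z0 t0 hb1 hc); exact hY.
    + rewrite hY; reflexivity.
  - intros [w [hw hq]]; injection hq as -> -> ->.
    repeat split; symmetry; apply (locus_Y_eq0 b1 c z0 t0 hb1 hc); exact hw.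
Qed.

Lemma char_points_unique : (forall z, Q z0 t0 z = 0 <-> z = z0) ->
  forall q, inH a1 a2 a3 a4 b1 (z0, t0, 0) q /\ inC q <-> q = (z0, t0, 0).
Proof.
  intros hroot q; rewrite char_point_iff; split.
  - intros [z [hz ->]]; apply hroot in hz as ->.
    rewrite locus_tau_z0 by assumption; reflexivity.
  - intros ->; exists z0; split; [apply hroot; reflexivity |].
    rewrite locus_tau_z0 by assumption; reflexivity.
Qed.

Lemma char_points_two w : (forall z, Q z0 t0 z = 0 <-> z = z0 \/ z = w) ->
  forall q, inH a1 a2 a3 a4 b1 (z0, t0, 0) q /\ inC q <->
    q = (z0, t0, 0) \/ q = (w, locus_tau b1 c z0 t0 w, 0).
Proof.
  intros hroot q; rewrite char_point_iff.
  pose proof (locus_tau_z0 b1 c z0 t0 hb1 hc) as htau.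
  split.
  - intros [z [hz ->]]; apply hroot in hz as [-> | ->]; [left | right].
    + rewrite htau; reflexivity.
    + reflexivity.
  - intros [-> | ->]; [exists z0 | exists w]; split.
    + apply hroot; left; reflexivity.
    + rewrite htau; reflexivity.
    + apply hroot; right; reflexivity.
    + reflexivity.
Qed.

End Hugoniot.

Theorem mainTheorem2 (a1 a2 a3 a4 b1 : R) (hb1 : 1 < b1) (hc : 0 < a3 - a2)
  (z0 tau0 : R) :
  let c := a3 - a2 in
  let p := (z0, tau0, 0) in
  let HC := fun q => inH a1 a2 a3 a4 b1 p q /\ inC q in
  let D := tau0 * z0 * (1 + z0 ^ 2) + 1 in
  let z1 := - (tau0 * (1 + z0 ^ 2) - z0) / D in
  (tau0 = 0 ->
     (forall q, HC q <-> q = p) /\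
     exists tauf Yf, Hgraph a1 a2 a3 a4 b1 p tauf Yf /\ is_derive Yf z0 0 /\
       ~ is_lim Yf p_infty 0)
  /\
  (tau0 <> 0 ->
     (D <> 0 ->
        exists tau1, (z1, tau1, 0) <> p /\
          forall q, HC q <-> (q = p \/ q = (z1, tau1, 0)))
     /\
     (D = 0 ->
        (forall q, HC q <-> q = p) /\
        forall tauf Yf, Hgraph a1 a2 a3 a4 b1 p tauf Yf ->
          is_lim Yf p_infty 0 /\ is_lim Yf m_infty 0)
     /\
     exists tauf Yf, Hgraph a1 a2 a3 a4 b1 p tauf Yf /\
       is_derive Yf z0 (- 2 * c * tau0 * (1 + z0 ^ 2) / (1 + (b1 - 1) * z0 ^ 2)) /\
       - 2 * c * tau0 * (1 + z0 ^ 2) / (1 + (b1 - 1) * z0 ^ 2) <> 0).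
Proof.
  intros c p HC D' z1'.
  pose proof (Hgraph_locus a1 a2 a3 a4 b1 z0 tau0 hb1 hc) as hgraph.
  pose proof (is_derive_locus_Y b1 c z0 tau0 hb1) as hderiv.
  split; [intro ht0 | intro ht0; split; [| split]].
  - split; [apply char_points_unique; auto; intro; apply Q_root_tangent, ht0 |].
    exists (locus_tau b1 c z0 tau0), (locus_Y b1 c z0 tau0); split; [exact hgraph | split].
    + rewrite <- (proj2 (locus_slope_eq0 b1 c z0 tau0 hb1 hc) ht0); exact hderiv.
    + intro hlim.
      destruct (Hgraph_is_lim_infty a1 a2 a3 a4 b1 z0 tau0 hb1 hc _ _ hgraph) as [hp _].
      fold c in hp; apply is_lim_unique in hlim, hp; rewrite hlim in hp; injection hp as hp.
      apply eq_sym, (locus_Y_infty_eq0 b1 c z0 tau0 hb1 hc) in hp.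
      unfold D in hp; rewrite ht0 in hp; lra.
  - intro hD; exists (locus_tau b1 c z0 tau0 z1'); split.
    + intro h; injection h as h _; exact (z1_neq_z0 z0 tau0 ht0 hD h).
    + apply char_points_two; auto; intro; apply Q_root_two, hD.
  - intro hD; split; [apply char_points_unique; auto; intro; apply Q_root_infinite, hD |].
    intros tauf Yf hg; rewrite <- (proj2 (locus_Y_infty_eq0 b1 c z0 tau0 hb1 hc) hD).
    exact (Hgraph_is_lim_infty a1 a2 a3 a4 b1 z0 tau0 hb1 hc _ _ hg).
  - exists (locus_tau b1 c z0 tau0), (locus_Y b1 c z0 tau0).
    split; [exact hgraph | split; [exact hderiv |]].
    intro h; apply ht0, (locus_slope_eq0 b1 c z0 tau0 hb1 hc), h.
Qed.
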